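(* The mapping $\mathbb H\times(0,1)\times(\mathbb R/2\pi\mathbb Z)\ni(z,t,\theta)\mapsto h_{-it}(z,\theta)\in\mathbb H^{\mathbb C}$ is a diffeomorphism onto a set of the form $U\setminus\mathbb H$, where $U\subset\mathbb H^{\mathbb C}$ is an open neighbourhood of $\mathbb H$.
   Context: $\mathbb H=\{x+iy: y>0\}$ is the hyperbolic plane with metric $(dx^2+dy^2)/y^2$. $\mathbb H^{\mathbb C}:=\mathbb C\times\mathbb C\ni(X,Y)$, with $\mathbb H$ embedded as $\{(x,y): x\in\mathbb R, y>0\}$. A right horocycle is any image of the curve $t\mapsto -t+i$ ($t\in\mathbb R$) under an orientation-preserving isometry of $\mathbb H$ (unit-speed curve of constant geodesic curvature $1$ curving to the right). For $z=x+iy\in\mathbb H$ and $\theta\in\mathbb R/2\pi\mathbb Z$ let $\phi$ be the unique right horocycle with $\phi(0)=z$, $\phi'(0)=y(\cos\theta\,\partial_x+\sin\theta\,\partial_y)$, and set $h_t(z,\theta):=(\Re\phi(t),\Im\phi(t))$ for $t\in\mathbb R$. The functions $t\mapsto\Re\phi(t),\Im\phi(t)$ extend holomorphically to $\{|\Im t|<1\}$, giving $h_t(z,\theta)\in\mathbb C\times\mathbb C$ for such complex $t$; e.g. $h_t(x+iy,\pi)=(x-ty,y)$ and every right horocycle is, up to time shift, $t\mapsto x_0+\frac{y_0t}{t^2+1}+i\frac{y_0}{t^2+1}$ or $t\mapsto x_0-ty_0+iy_0$. *)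

From HB Require Import structures.
From mathcomp Require Import all_boot all_order all_algebra.
From mathcomp Require Import all_classical all_reals all_analysis.
Set Implicit Arguments. Unset Strict Implicit. Unset Printing Implicit Defensive.
Import Order.TTheory GRing.Theory Num.Theory.
Import numFieldNormedType.Exports.
Local Open Scope classical_set_scope.
Local Open Scope ring_scope.

Fixpoint iter_derive {R : numFieldType} {V W : normedModType R}
  (vs : seq V) (f : V -> W) : V -> W :=
  match vs with
  | [::] => f
  | v :: vs' => fun x => 'D_v (iter_derive vs' f) x
  end.

Definition smooth_on {R : numFieldType} {V W : normedModType R}
  (A : set V) (f : V -> W) : Prop :=
  forall vs : seq V,
    (forall x, A x -> {for x, continuous (iter_derive vs f)}) /\
    (forall v x, A x -> derivable (iter_derive vs f) x v).

(* H^C = C x C identified with R^4 via (X, Y) |-> (Re X, Im X, Re Y, Im Y). *)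
Definition HC (R : realType) := (R * R * R * R)%type.

(* The copy of the hyperbolic plane H inside H^C: real points with y > 0. *)
Definition Hemb {R : realType} : set (HC R) :=
  [set w | w.1.1.2 = 0 /\ w.2 = 0 /\ 0 < w.1.2].

(* Parameter domain H x (0,1) x R (the angle theta is lifted to R; all maps
   below are 2pi-periodic in theta). *)
Definition param_dom {R : realType} : set (R * R * R * R) :=
  [set p | 0 < p.1.1.2 /\ 0 < p.1.2 < 1].

(* h_tau(x+iy, theta) for complex tau = tau1 + i tau2, in real coordinates.
   For real tau it is (Re phi(tau), Im phi(tau)) with
     phi(tau) = x + y N(tau)/D(tau) + i y/D(tau),
     D(tau) = 1 - tau sin theta + tau^2 (1 + cos theta)/2,
     N(tau) = tau cos theta + tau^2 (sin theta)/2,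
   and the complex extension is the same rational expression in complex tau. *)
Definition hC {R : realType} (x y th tau1 tau2 : R) : HC R :=
  let c := cos th in let s := sin th in
  (* tau^2 = (tau1^2 - tau2^2) + i (2 tau1 tau2) *)
  let sq1 := tau1 ^+ 2 - tau2 ^+ 2 in let sq2 := 2 * tau1 * tau2 in
  let d1 := 1 - tau1 * s + sq1 * (1 + c) / 2 in
  let d2 := - tau2 * s + sq2 * (1 + c) / 2 in
  let n1 := tau1 * c + sq1 * s / 2 in
  let n2 := tau2 * c + sq2 * s / 2 in
  let q := d1 ^+ 2 + d2 ^+ 2 in
  (* N/D = ((n1 d1 + n2 d2) + i (n2 d1 - n1 d2)) / q ;  1/D = (d1 - i d2)/q *)
  (x + y * (n1 * d1 + n2 * d2) / q, y * (n2 * d1 - n1 * d2) / q,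
   y * d1 / q, - (y * d2) / q).

Definition Fmap {R : realType} (p : R * R * R * R) : HC R :=
  let: (x, y, t, th) := p in hC x y th 0 (- t).

From HB Require Import structures.
From mathcomp Require Import all_boot all_order all_algebra.
From mathcomp Require Import all_classical all_reals all_analysis.
From mathcomp Require Import ring lra.
Import Order.TTheory GRing.Theory Num.Theory.
Import numFieldNormedType.Exports.
Local Open Scope classical_set_scope.
Local Open Scope ring_scope.

(* In the coordinates c = cos th, s = sin th the map is (x + y N/D, y/D) with
   N, D polynomial in (t, c, s).  Its components are built from coordinates by
   field operations, cos, sin and square roots, and such elementary functions
   form a class closed under directional derivatives, hence are smooth.  The map
   is inverted explicitly: from w = (X1, X2, Y1, Y2) one reads off
   t^2 = (X2^2 + Y2^2) / (Y1^2 + Y2^2), then (c, s) from the ratios X2 / Y1 and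
   Y2 / Y1, then (x, y).  This inverse is elementary on U \ H with
   U = {Y1 > 0, X2^2 < Y1^2}: there 0 < t < 1, and t = 0 exactly on H.  Finally
   (c, s) determines th modulo 2 pi. *)

Section DirectionalDerivative.
Context {R : realType} {V W : normedModType R}.

Lemma derive_line (f : V -> W) x v :
  'D_v f x = 'D_1 (fun h : R => f (h *: v + x)) 0.
Proof.
rewrite /derive; set g1 := fun h => h^-1 *: _; set g2 := fun h => h^-1 *: _.
suff -> : g1 = g2 by [].
by apply: funext => h; rewrite /g1 /g2 /= addr0 scale0r add0r [_%:A]mulr1.
Qed.

Lemma is_derive_line (f : V -> W) x v (df : W) :
  is_derive x v f df <-> is_derive (0 : R) 1 (fun h : R => f (h *: v + x)) df.
Proof.
split=> -[d e]; split.
- by move/derivable1P: d.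
- by rewrite -derive_line.
- by apply/derivable1P.
- by rewrite derive_line.
Qed.

Lemma is_derive_pair {W' : normedModType R} (f : V -> W) (g : V -> W') x v df dg :
  is_derive x v f df -> is_derive x v g dg ->
  is_derive x v (fun y => (f y, g y)) (df, dg).
Proof.
move=> [d1 <-] [d2 <-].
have C : (fun h : R => h^-1 *: (((fun y => (f y, g y)) \o shift x) (h *: v) - (f x, g x)))
    @ 0^' --> ('D_v f x, 'D_v g x) by exact: cvg_pair d1 d2.
by split; [apply/cvg_ex; eexists; exact: C | exact: cvg_lim C].
Qed.

Lemma near_eq_continuous (T : topologicalType) (f g : T -> W) x :
  (\near x, f x = g x) -> {for x, continuous f} -> {for x, continuous g}.
Proof.
move=> fg cf; have fgx : f x = g x by apply: nbhs_singleton fg.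
by rewrite /prop_for /continuous_at -fgx; apply: cvg_trans cf; apply: near_eq_cvg.
Qed.

End DirectionalDerivative.

Section ScalarDerivative.
Context {R : realType} {V : normedModType R}.

Lemma is_derive_linear (p : V -> R) x v :
  (forall h : R, p (h *: v + x) = h * p v + p x) -> is_derive x v p (p v).
Proof.
move=> pE; apply/(is_derive_line p x v (p v)).
have -> : (fun h : R => p (h *: v + x)) = id * cst (p v) + cst (p x).
  by apply: funext => h; rewrite pE.
apply: is_derive_eq.
by rewrite scaler0 add0r addr0 /cst [_%:A]mulr1.
Qed.

Lemma is_derive_inv {f : V -> R} {x v} {df : R} : f x != 0 ->
  is_derive x v f df -> is_derive x v (fun y => (f y)^-1) (- (f x) ^- 2 *: df).
Proof.
move=> fx0 [d e]; split; first exact: derivableV.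
by rewrite deriveV // e.
Qed.

Lemma is_derive_comp1 {f : V -> R} {g : R -> R} {x v} {df dg : R} :
  is_derive x v f df -> is_derive (f x) 1 g dg ->
  is_derive x v (fun y => g (f y)) (dg * df).
Proof.
move=> /(is_derive_line f x v df)[dk ek] [dg1 eg].
apply/(is_derive_line (fun y => g (f y)) x v (dg * df)).
set k := fun h : R => f (h *: v + x) in dk ek *.
have k0 : k 0 = f x by rewrite /k scale0r add0r.
have dkd : differentiable k 0 by apply/derivable1_diffP.
have dgd : differentiable g (k 0) by rewrite k0; apply/derivable1_diffP.
split; first by apply/derivable1_diffP; apply: differentiable_comp.
have := @derive1_comp R k g 0; rewrite !derive1E => -> //.
- by rewrite k0 eg ek.
- by apply/derivable1_diffP.
Qed.

End ScalarDerivative.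

Section Smoothness.
Context {R : realType} {V W : normedModType R}.

Definition derivation_closed (A : set V) (S : (V -> W) -> Prop) :=
  (forall f, S f -> forall x, A x -> {for x, continuous f}) /\
  (forall f v, S f -> exists2 g, S g & forall x, A x -> is_derive x v f (g x)).

Lemma derivation_closed_smooth (A : set V) (S : (V -> W) -> Prop) f :
  open A -> derivation_closed A S -> S f -> smooth_on A f.
Proof.
move=> oA [Scont Sder] Sf.
have nearA x : A x -> \forall y \near x, A y by move=> Ax; exact: open_nbhs_nbhs.
have iterS vs : exists2 g, S g & forall x, A x -> iter_derive vs f x = g x.
  elim: vs => [|v vs [g Sg gE]] /=; first by exists f.
  have [g' Sg' dg] := Sder g v Sg.
  exists g' => // x Ax; case: (dg x Ax) => _ <-.
  apply: near_eq_derive; near=> y; apply: gE; near: y; exact: nearA.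
move=> vs; have [g Sg gE] := iterS vs.
have gE_near x : A x -> \forall y \near x, g y = iter_derive vs f y.
  by move=> Ax; near=> y; rewrite gE //; near: y; exact: nearA.
split=> [x Ax | v x Ax]; first exact: near_eq_continuous (gE_near x Ax) (Scont g Sg x Ax).
have [g' _ dg] := Sder g v Sg.
by apply: near_eq_derivable (gE_near x Ax) _; case: (dg x Ax).
Unshelve. all: by end_near.
Qed.

Lemma smooth_on_pair {W' : normedModType R} (A : set V) (f : V -> W) (g : V -> W') :
  open A -> smooth_on A f -> smooth_on A g -> smooth_on A (fun x => (f x, g x)).
Proof.
move=> oA sf sg.
have nearA x : A x -> \forall y \near x, A y by move=> Ax; exact: open_nbhs_nbhs.
have iterE vs x : A x ->
    iter_derive vs (fun y => (f y, g y)) x = (iter_derive vs f x, iter_derive vs g x).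
  elim: vs x => [//|v vs IH] x Ax /=.
  rewrite (near_eq_derive (g := fun y => (iter_derive vs f y, iter_derive vs g y))).
    apply: derive_val; apply: is_derive_pair; apply: derivableP.
    + exact: (sf vs).2.
    + exact: (sg vs).2.
  by near=> y; apply: IH; near: y; exact: nearA.
move=> vs.
have iterE_near x : A x -> \forall y \near x,
    (iter_derive vs f y, iter_derive vs g y) = iter_derive vs (fun y => (f y, g y)) y.
  by move=> Ax; near=> y; rewrite iterE //; near: y; exact: nearA.
split=> [x Ax | v x Ax].
- apply: near_eq_continuous (iterE_near x Ax) _.
  by apply: cvg_pair; [exact: (sf vs).1 | exact: (sg vs).1].
- apply: near_eq_derivable (iterE_near x Ax) _.
  apply: ex_derive; apply: is_derive_pair; apply: derivableP.
  + exact: (sf vs).2.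
  + exact: (sg vs).2.
Unshelve. all: by end_near.
Qed.

End Smoothness.

Section Elementary.
Context {R : realType}.
Local Notation V := (R * R * R * R)%type.

Inductive elementary (A : set V) : (V -> R) -> Prop :=
| elementary_cst c : elementary A (fun _ => c)
| elementary_coord1 : elementary A (fun p => p.1.1.1)
| elementary_coord2 : elementary A (fun p => p.1.1.2)
| elementary_coord3 : elementary A (fun p => p.1.2)
| elementary_coord4 : elementary A (fun p => p.2)
| elementary_add f g : elementary A f -> elementary A g -> elementary A (fun p => f p + g p)
| elementary_mul f g : elementary A f -> elementary A g -> elementary A (fun p => f p * g p)
| elementary_inv f : elementary A f -> (forall x, A x -> f x != 0) ->
    elementary A (fun p => (f p)^-1)
| elementary_cos f : elementary A f -> elementary A (fun p => cos (f p))
| elementary_sin f : elementary A f -> elementary A (fun p => sin (f p))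
| elementary_sqrt f : elementary A f -> (forall x, A x -> 0 < f x) ->
    elementary A (fun p => Num.sqrt (f p)).

Lemma elementary_continuous (A : set V) f :
  elementary A f -> forall x, A x -> {for x, continuous f}.
Proof.
elim=> {f}.
- by move=> c x _; apply: cvg_cst.
- by move=> x _; exact: (continuous_comp cvg_fst (continuous_comp cvg_fst cvg_fst)).
- by move=> x _; exact: (continuous_comp cvg_fst (continuous_comp cvg_fst cvg_snd)).
- by move=> x _; exact: (continuous_comp cvg_fst cvg_snd).
- by move=> x _; exact: cvg_snd.
- by move=> f g _ cf _ cg x Ax; apply: continuousD; [apply: cf | apply: cg].
- by move=> f g _ cf _ cg x Ax; apply: continuousM; [apply: cf | apply: cg].
- by move=> f _ cf f0 x Ax; apply: continuousV; [apply: f0 | apply: cf].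
- by move=> f _ cf x Ax; apply: (continuous_comp (cf x Ax)); exact: continuous_cos.
- by move=> f _ cf x Ax; apply: (continuous_comp (cf x Ax)); exact: continuous_sin.
- by move=> f _ cf _ x Ax; apply: (continuous_comp (cf x Ax)); exact: sqrt_continuous.
Qed.

Lemma elementary_derive (A : set V) f : elementary A f ->
  forall v, exists2 g, elementary A g & forall x, A x -> is_derive x v f (g x).
Proof.
elim=> {f}.
- by move=> c v; exists (fun _ => 0) => [|x _]; [exact: elementary_cst | exact: is_derive_cst].
- by move=> v; exists (fun _ => v.1.1.1) => [|x _]; [exact: elementary_cst | exact: is_derive_linear].
- by move=> v; exists (fun _ => v.1.1.2) => [|x _]; [exact: elementary_cst | exact: is_derive_linear].
- by move=> v; exists (fun _ => v.1.2) => [|x _]; [exact: elementary_cst | exact: is_derive_linear].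
- by move=> v; exists (fun _ => v.2) => [|x _]; [exact: elementary_cst | exact: is_derive_linear].
- move=> f g _ df _ dg v; have [f' ef' fD] := df v; have [g' eg' gD] := dg v.
  exists (fun p => f' p + g' p); first exact: elementary_add.
  by move=> x Ax; apply: is_deriveD; [exact: fD | exact: gD].
- move=> f g ef df eg dg v; have [f' ef' fD] := df v; have [g' eg' gD] := dg v.
  exists (fun p => f p * g' p + g p * f' p).
    by apply: elementary_add; exact: elementary_mul.
  by move=> x Ax; apply: is_deriveM; [exact: fD | exact: gD].
- move=> f ef df f0 v; have [f' ef' fD] := df v.
  exists (fun p => (-1) * ((f p * f p)^-1 * f' p)).
    apply: elementary_mul; first exact: elementary_cst.
    apply: elementary_mul => //; apply: elementary_inv; first exact: elementary_mul.
    by move=> x Ax; rewrite mulf_neq0 // f0.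
  move=> x Ax; apply: is_derive_eq; first exact: (is_derive_inv (f0 x Ax) (fD x Ax)).
  by rewrite expr2 mulN1r scaleNr.
- move=> f ef df v; have [f' ef' fD] := df v.
  exists (fun p => ((-1) * sin (f p)) * f' p).
    apply: elementary_mul => //.
    by apply: elementary_mul; [exact: elementary_cst | exact: elementary_sin].
  move=> x Ax; apply: is_derive_eq.
    exact: (is_derive_comp1 (fD x Ax) (is_derive_cos (f x))).
  by rewrite mulN1r.
- move=> f ef df v; have [f' ef' fD] := df v.
  exists (fun p => cos (f p) * f' p); first by apply: elementary_mul => //; exact: elementary_cos.
  by move=> x Ax; exact: (is_derive_comp1 (fD x Ax) (is_derive_sin (f x))).
- move=> f ef df f_gt0 v; have [f' ef' fD] := df v.
  exists (fun p => (2 * Num.sqrt (f p))^-1 * f' p).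
    apply: elementary_mul => //; apply: elementary_inv.
      by apply: elementary_mul; [exact: elementary_cst | exact: elementary_sqrt].
    by move=> x Ax; rewrite gt_eqF // mulr_gt0 // sqrtr_gt0 f_gt0.
  by move=> x Ax; exact: (is_derive_comp1 (fD x Ax) (is_derive1_sqrt (f_gt0 x Ax))).
Qed.

Lemma elementary_smooth (A : set V) f : open A -> elementary A f -> smooth_on A f.
Proof.
move=> oA; apply: derivation_closed_smooth oA _.
by split=> [g /elementary_continuous | g v /elementary_derive]; apply.
Qed.

Lemma elementaryN (A : set V) f : elementary A f -> elementary A (fun p => - f p).
Proof.
move=> ef; have -> : (fun p => - f p) = (fun p => -1 * f p) by apply: funext => p; rewrite mulN1r.
by apply: elementary_mul => //; exact: elementary_cst.
Qed.

Lemma elementaryX (A : set V) f n : elementary A f -> elementary A (fun p => f p ^+ n).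
Proof.
move=> ef; elim: n => [|n IH].
  have -> : (fun p => f p ^+ 0) = (fun _ => 1) by apply: funext => p; rewrite expr0.
  exact: elementary_cst.
have -> : (fun p => f p ^+ n.+1) = (fun p => f p * f p ^+ n) by apply: funext => p; rewrite exprS.
exact: elementary_mul.
Qed.

Lemma open_elementary_gt0 (f : V -> R) : elementary setT f -> open [set x | 0 < f x].
Proof.
move=> ef; rewrite -[X in open X]/(f @^-1` [set x | 0 < x]).
apply: open_comp; last exact: open_gt.
by move=> x _; exact: elementary_continuous ef x I.
Qed.

End Elementary.

Ltac decompose_elementary := repeat first
  [ apply: elementary_cst | apply: elementary_coord1 | apply: elementary_coord2
  | apply: elementary_coord3 | apply: elementary_coord4 | apply: elementary_add
  | apply: elementary_mul | apply: elementaryN | apply: elementaryX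
  | apply: elementary_cos | apply: elementary_sin | apply: elementary_inv
  | apply: elementary_sqrt ].

Section AngleFromCosSin.
Context {R : realType}.

Lemma cosD_int2pi (x : R) (k : int) : cos (x + k%:~R * (2 * pi)) = cos x.
Proof.
have cosDn := periodicn (@cosD2pi R).
have nat2pi n : n%:R * (2 * pi) = (pi *+ 2) *+ n :> R by rewrite -mulr_natl mulr2n; ring.
case: k => n; first by rewrite pmulrn nat2pi cosDn.
rewrite NegzE mulrNz mulNr pmulrn nat2pi.
by rewrite -[in RHS](subrK ((pi *+ 2) *+ n.+1) x) cosDn.
Qed.

Lemma cos_eq1 (r : R) : 0 <= r < 2 * pi -> cos r = 1 -> r = 0.
Proof.
move=> /andP[r_ge0 r_lt2pi] cosr.
have pi_gt0 := pi_gt0 R.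
have in0pi : (0 : R) \in `[0, pi]%R by rewrite in_itv /= lexx ltW.
have [r_lepi | pi_ltr] := leP r pi.
  by apply: cos_inj; rewrite ?in_itv /= ?r_ge0 ?r_lepi ?cos0.
suff : 2 * pi - r = 0 by lra.
apply: cos_inj => //; first by rewrite in_itv /=; apply/andP; split; lra.
have -> : 2 * pi - r = - r + pi *+ 2 by rewrite mulr2n; ring.
by rewrite cosD2pi cosN cosr cos0.
Qed.

Lemma cos_sin_eq_mod2pi (a b : R) : cos a = cos b -> sin a = sin b ->
  exists k : int, a = b + k%:~R * (2 * pi).
Proof.
move=> cosab sinab.
have cos_ab : cos (a - b) = 1 by rewrite cosB cosab sinab -!expr2 cos2Dsin2.
have pi2_gt0 : 0 < 2 * (pi : R) by rewrite mulr_gt0 // pi_gt0.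
pose k := Num.floor ((a - b) / (2 * pi)); exists k.
have k_le : k%:~R <= (a - b) / (2 * pi) by exact: floor_le.
have k_gt : (a - b) / (2 * pi) < k%:~R + 1 by rewrite -intrD1 floorD1_gt.
rewrite ler_pdivlMr // in k_le; rewrite ltr_pdivrMr // in k_gt.
suff : a - b - k%:~R * (2 * pi) = 0 by lra.
apply: cos_eq1; first by apply/andP; split; lra.
by rewrite -(cosD_int2pi _ k) subrK.
Qed.

Lemma cos_sin_onto_circle {c s : R} : c ^+ 2 + s ^+ 2 = 1 ->
  exists th : R, cos th = c /\ sin th = s.
Proof.
move=> cs1.
have c_in : -1 <= c <= 1 by apply/andP; split; nra.
have sqrt_s : Num.sqrt (1 - c ^+ 2) = `|s| by rewrite -sqrtr_sqr; congr Num.sqrt; lra.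
have [s_ge0 | s_lt0] := leP 0 s.
- by exists (acos c); rewrite acosK ?in_itv //= sin_acos // sqrt_s ger0_norm.
- exists (- acos c); rewrite cosN sinN acosK ?in_itv //= sin_acos // sqrt_s.
  by rewrite ltr0_norm ?opprK.
Qed.

End AngleFromCosSin.

Section HorocycleMap.
Context {R : realType}.

(* With c = cos th and s = sin th, the denominator and numerator of h_{-it}
   are D(-it) = den_re + i den_im and N(-it) = num_re + i num_im, and Fcs is
   (x + y N/D, y/D) in the real coordinates of HC. *)
Definition den_re (t c : R) := 1 - t ^+ 2 * (1 + c) / 2.
Definition den_im (t s : R) := t * s.
Definition num_re (t s : R) := - (t ^+ 2 * s / 2).
Definition num_im (t c : R) := - (t * c).
Definition den_sqr (t c s : R) := den_re t c ^+ 2 + den_im t s ^+ 2.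

Definition Fcs (x y t c s : R) : HC R :=
  (x + y * (num_re t s * den_re t c + num_im t c * den_im t s) / den_sqr t c s,
   y * (num_im t c * den_re t c - num_re t s * den_im t s) / den_sqr t c s,
   y * den_re t c / den_sqr t c s, - (y * den_im t s) / den_sqr t c s).

Lemma Fmap_Fcs (p : R * R * R * R) :
  Fmap p = Fcs p.1.1.1 p.1.1.2 p.1.2 (cos p.2) (sin p.2).
Proof.
case: p => [[[x y] t] th]; rewrite /Fmap /hC /Fcs /den_sqr /=.
have -> : 1 - 0 * sin th + (0 ^+ 2 - (- t) ^+ 2) * (1 + cos th) / 2 = den_re t (cos th).
  by rewrite /den_re; ring.
have -> : - - t * sin th + 2 * 0 * - t * (1 + cos th) / 2 = den_im t (sin th).
  by rewrite /den_im; ring.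
have -> : 0 * cos th + (0 ^+ 2 - (- t) ^+ 2) * sin th / 2 = num_re t (sin th).
  by rewrite /num_re; ring.
by have -> : - t * cos th + 2 * 0 * - t * sin th / 2 = num_im t (cos th) by rewrite /num_im; ring.
Qed.

Lemma den_re_gt0 {t c : R} : 0 < t < 1 -> c ^+ 2 <= 1 -> 0 < den_re t c.
Proof.
move=> /andP[t_gt0 t_lt1] c2_le1; rewrite /den_re.
have : t ^+ 2 * (1 + c) <= t ^+ 2 * 2 by rewrite ler_pM2l ?exprn_gt0 //; nra.
nra.
Qed.

Lemma den_sqr_gt0 {t c s : R} : 0 < t < 1 -> c ^+ 2 + s ^+ 2 = 1 -> 0 < den_sqr t c s.
Proof.
move=> t01 cs1; have c2_le1 : c ^+ 2 <= 1 by have := sqr_ge0 s; lra.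
have := den_re_gt0 t01 c2_le1; have := sqr_ge0 (den_im t s).
by rewrite /den_sqr; nra.
Qed.

Definition nbhdH : set (HC R) := [set w | 0 < w.1.2 /\ w.1.1.2 ^+ 2 < w.1.2 ^+ 2].

Definition nbhdH_offH : set (HC R) :=
  [set w | [/\ 0 < w.1.2, w.1.1.2 ^+ 2 < w.1.2 ^+ 2 & 0 < w.1.1.2 ^+ 2 + w.2 ^+ 2]].

Lemma Fcs_sqr x y {t c s : R} : 0 < t < 1 -> c ^+ 2 + s ^+ 2 = 1 ->
  let w := Fcs x y t c s in
  w.1.2 ^+ 2 + w.2 ^+ 2 = y ^+ 2 / den_sqr t c s /\
  w.1.1.2 ^+ 2 + w.2 ^+ 2 = t ^+ 2 * (y ^+ 2 / den_sqr t c s).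
Proof.
move=> t01 cs1; have q_neq0 : den_sqr t c s != 0 by rewrite gt_eqF // den_sqr_gt0.
have s2 : s ^+ 2 = 1 - c ^+ 2 by lra.
have numE : (num_im t c * den_re t c - num_re t s * den_im t s) ^+ 2 + den_im t s ^+ 2
    = t ^+ 2 * den_sqr t c s.
  by rewrite /den_sqr /num_im /num_re /den_re /den_im; field: s2.
rewrite /Fcs /=; move: q_neq0 numE; rewrite /den_sqr.
set P := num_im t c * den_re t c - num_re t s * den_im t s.
set q := den_re t c ^+ 2 + den_im t s ^+ 2; move=> q_neq0 numE.
split; first by rewrite /q; field.
have -> : (y * P / q) ^+ 2 + (- (y * den_im t s) / q) ^+ 2
    = y ^+ 2 * (P ^+ 2 + den_im t s ^+ 2) / q ^+ 2 by field.
by rewrite numE; field.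
Qed.

Lemma Fcs_offH x {y t c s : R} : 0 < y -> 0 < t < 1 -> c ^+ 2 + s ^+ 2 = 1 ->
  nbhdH_offH (Fcs x y t c s).
Proof.
move=> y_gt0 t01 cs1; have [Y_sqr XY_sqr] := Fcs_sqr x y t01 cs1.
have q_gt0 := den_sqr_gt0 t01 cs1.
have c2_le1 : c ^+ 2 <= 1 by have := sqr_ge0 s; lra.
have Y_gt0 : 0 < y ^+ 2 / den_sqr t c s by rewrite divr_gt0 ?exprn_gt0.
case/andP: t01 => t_gt0 t_lt1; have t2_lt1 : t ^+ 2 < 1 by nra.
split.
- by rewrite /= !divr_gt0 ?mulr_gt0 // den_re_gt0 ?t_gt0.
- have : 0 < (1 - t ^+ 2) * (y ^+ 2 / den_sqr t c s) by rewrite mulr_gt0 ?subr_gt0.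
  lra.
- have : 0 < t ^+ 2 * (y ^+ 2 / den_sqr t c s) by rewrite mulr_gt0 ?exprn_gt0.
  lra.
Qed.

(* For w = Fcs x y t c s, Fcs_sqr gives t^2 = (X2^2 + Y2^2) / (Y1^2 + Y2^2);
   the ratios r1 = X2 / Y1 and r2 = Y2 / Y1 satisfy r2 = - den_im / den_re,
   which is linear in s, and r1 = num_im + r2 num_re, which after eliminating
   s is linear in c. *)
Definition inv_cos (t r1 r2 : R) :=
  (r2 ^+ 2 * t * (2 - t ^+ 2) - 4 * r1) / (t * (4 + r2 ^+ 2 * t ^+ 2)).
Definition inv_sin (t r2 c : R) := - (r2 * den_re t c) / t.

Definition Finv (w : HC R) : R * R * R * (R * R) :=
  let t := Num.sqrt ((w.1.1.2 ^+ 2 + w.2 ^+ 2) / (w.1.2 ^+ 2 + w.2 ^+ 2)) in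
  let c := inv_cos t (w.1.1.2 / w.1.2) (w.2 / w.1.2) in
  let s := inv_sin t (w.2 / w.1.2) c in
  (w.1.1.1 - (w.1.2 * num_re t s - w.2 * num_im t c),
   w.1.2 * den_re t c - w.2 * den_im t s, t, (c, s)).

Lemma FinvE (w : HC R) {t r1 r2 : R} :
  Num.sqrt ((w.1.1.2 ^+ 2 + w.2 ^+ 2) / (w.1.2 ^+ 2 + w.2 ^+ 2)) = t ->
  w.1.1.2 / w.1.2 = r1 -> w.2 / w.1.2 = r2 ->
  let c := inv_cos t r1 r2 in let s := inv_sin t r2 c in
  Finv w = (w.1.1.1 - (w.1.2 * num_re t s - w.2 * num_im t c),
            w.1.2 * den_re t c - w.2 * den_im t s, t, (c, s)).
Proof. by rewrite /Finv => -> -> ->. Qed.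

Lemma Finv_Fcs x {y t c s : R} : 0 < y -> 0 < t < 1 -> c ^+ 2 + s ^+ 2 = 1 ->
  Finv (Fcs x y t c s) = (x, y, t, (c, s)).
Proof.
move=> y_gt0 t01 cs1; have [Y_sqr XY_sqr] := Fcs_sqr x y t01 cs1.
have q_gt0 := den_sqr_gt0 t01 cs1.
have c2_le1 : c ^+ 2 <= 1 by have := sqr_ge0 s; lra.
have D_gt0 := den_re_gt0 t01 c2_le1.
have s2 : s ^+ 2 = 1 - c ^+ 2 by lra.
case/andP: t01 => t_gt0 _.
have [y0 q0 D0 t0] : [/\ y != 0, den_sqr t c s != 0, den_re t c != 0 & t != 0].
  by split; apply: lt0r_neq0.
set P := num_im t c * den_re t c - num_re t s * den_im t s.
have tE : Num.sqrt (((Fcs x y t c s).1.1.2 ^+ 2 + (Fcs x y t c s).2 ^+ 2) /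
                    ((Fcs x y t c s).1.2 ^+ 2 + (Fcs x y t c s).2 ^+ 2)) = t.
  by rewrite XY_sqr Y_sqr mulfK ?mulf_neq0 ?invr_neq0 ?expf_neq0 // sqrtr_sqr gtr0_norm.
have r1E : (Fcs x y t c s).1.1.2 / (Fcs x y t c s).1.2 = P / den_re t c.
  by rewrite /= /P; field; rewrite D0 q0 y0.
have r2E : (Fcs x y t c s).2 / (Fcs x y t c s).1.2 = - den_im t s / den_re t c.
  by rewrite /=; field; rewrite D0 q0 y0.
have cE : inv_cos t (P / den_re t c) (- den_im t s / den_re t c) = c.
  have den_pos : 0 < 2 - t ^+ 2 * (1 + c) by move: D_gt0; rewrite /den_re; lra.
  rewrite /inv_cos /P /num_im /num_re /den_im /den_re; field: s2.
  rewrite (gt_eqF den_pos) t0 andbT gt_eqF //.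
  have := mulr_gt0 den_pos den_pos; have := mulr_ge0 (sqr_ge0 (t * s)) (sqr_ge0 t).
  nra.
have sE : inv_sin t (- den_im t s / den_re t c) c = s.
  by rewrite /inv_sin /den_im; field; rewrite D0 t0.
rewrite (FinvE _ tE r1E r2E) /= cE sE /Fcs /den_sqr /=; congr (_, _, _, _); field; exact: q0.
Qed.

Lemma inv_cos_sin_sqr {t r1 r2 : R} : 0 < t ->
  r1 ^+ 2 = t ^+ 2 + t ^+ 2 * r2 ^+ 2 - r2 ^+ 2 ->
  inv_cos t r1 r2 ^+ 2 + inv_sin t r2 (inv_cos t r1 r2) ^+ 2 = 1.
Proof.
move=> t_gt0 r1_sqr.
have den_gt0 : 0 < 4 + (r2 * t) ^+ 2 by have := sqr_ge0 (r2 * t); lra.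
rewrite /inv_sin /inv_cos /den_re; field: r1_sqr.
by rewrite (gt_eqF t_gt0) (gt_eqF den_gt0).
Qed.

Lemma den_im_inv_sin {t : R} r2 c : t != 0 -> den_im t (inv_sin t r2 c) = - r2 * den_re t c.
Proof. by move=> t0; rewrite /den_im /inv_sin; field. Qed.

Lemma num_im_inv_cos {t : R} r1 r2 : 0 < t ->
  num_im t (inv_cos t r1 r2) + r2 * num_re t (inv_sin t r2 (inv_cos t r1 r2)) = r1.
Proof.
move=> t_gt0.
have den_gt0 : 0 < 4 + (r2 * t) ^+ 2 by have := sqr_ge0 (r2 * t); lra.
rewrite /num_im /num_re /inv_sin /inv_cos /den_re; field.
by rewrite (gt_eqF t_gt0) (gt_eqF den_gt0).
Qed.

Lemma Fcs_ratios X1 Y1 {r1 r2 t c s : R} : den_re t c != 0 ->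
  den_im t s = - r2 * den_re t c -> num_im t c + r2 * num_re t s = r1 ->
  Fcs (X1 - (Y1 * num_re t s - r2 * Y1 * num_im t c))
      (Y1 * den_re t c - r2 * Y1 * den_im t s) t c s = (X1, r1 * Y1, Y1, r2 * Y1).
Proof.
move=> D0 imE reE.
have q0 : den_re t c ^+ 2 + (- r2 * den_re t c) ^+ 2 != 0.
  rewrite (_ : _ + _ = den_re t c ^+ 2 * (1 + r2 ^+ 2)); last by ring.
  by rewrite mulf_neq0 ?expf_neq0 // lt0r_neq0 // ltr_pwDl ?sqr_ge0.
by rewrite /Fcs /den_sqr imE -reE; congr (_, _, _, _); field.
Qed.

Lemma Finv_offH {w : HC R} : nbhdH_offH w ->
  let g := Finv w in
  [/\ 0 < g.1.1.2, 0 < g.1.2 < 1, g.2.1 ^+ 2 + g.2.2 ^+ 2 = 1 &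
      Fcs g.1.1.1 g.1.1.2 g.1.2 g.2.1 g.2.2 = w].
Proof.
case: w => [[[X1 X2] Y1] Y2] [/= Y1_gt0 XY_lt Z_gt0].
have den_gt0 : 0 < Y1 ^+ 2 + Y2 ^+ 2 by have := sqr_ge0 Y2; nra.
set T := (X2 ^+ 2 + Y2 ^+ 2) / (Y1 ^+ 2 + Y2 ^+ 2).
have T_gt0 : 0 < T by rewrite divr_gt0.
have T_lt1 : T < 1 by rewrite ltr_pdivrMr // mul1r; lra.
set t := Num.sqrt T; set r1 := X2 / Y1; set r2 := Y2 / Y1.
have t_sqr : t ^+ 2 = T by rewrite sqr_sqrtr // ltW.
have t_gt0 : 0 < t by rewrite sqrtr_gt0.
have t01 : 0 < t < 1 by rewrite t_gt0 /=; nra.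
have Y1_neq0 : Y1 != 0 by rewrite gt_eqF.
have r1_sqr : r1 ^+ 2 = t ^+ 2 + t ^+ 2 * r2 ^+ 2 - r2 ^+ 2.
  by rewrite t_sqr /T /r1 /r2; field; rewrite Y1_neq0 gt_eqF.
have cs1 := inv_cos_sin_sqr t_gt0 r1_sqr.
have imE := den_im_inv_sin r2 (inv_cos t r1 r2) (lt0r_neq0 t_gt0).
have reE := num_im_inv_cos r1 r2 t_gt0.
rewrite /Finv /= -/T -/t -/r1 -/r2.
set c := inv_cos t r1 r2 in cs1 imE reE *; set s := inv_sin t r2 c in cs1 imE reE *.
have D_gt0 : 0 < den_re t c by apply: den_re_gt0 t01 _; have := sqr_ge0 s; lra.
have X2E : X2 = r1 * Y1 by rewrite /r1 mulfVK.
have Y2E : Y2 = r2 * Y1 by rewrite /r2 mulfVK.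
split => //.
- rewrite Y2E imE (_ : _ - _ = Y1 * den_re t c * (1 + r2 ^+ 2)); last by ring.
  by rewrite !mulr_gt0 // ltr_pwDl ?sqr_ge0.
- by rewrite Y2E X2E (Fcs_ratios X1 Y1 (lt0r_neq0 D_gt0) imE reE).
Qed.

Lemma open_nbhdH : open nbhdH.
Proof.
have -> : nbhdH = [set w | 0 < w.1.2] `&` [set w | 0 < w.1.2 ^+ 2 - w.1.1.2 ^+ 2].
  by apply/seteqP; split=> w /= [Y1_gt0 XY_lt]; split=> //; move: XY_lt; rewrite subr_gt0.
by apply: openI; apply: open_elementary_gt0; decompose_elementary.
Qed.

Lemma nbhdH_offHE : nbhdH_offH = nbhdH `&` [set w | 0 < w.1.1.2 ^+ 2 + w.2 ^+ 2].
Proof. by apply/seteqP; split=> w /= => [[] | [[]]]. Qed.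

Lemma open_nbhdH_offH : open nbhdH_offH.
Proof.
rewrite nbhdH_offHE; apply: openI; first exact: open_nbhdH.
by apply: open_elementary_gt0; decompose_elementary.
Qed.

Lemma Hemb_sub_nbhdH : Hemb `<=` nbhdH.
Proof. by move=> w [X2_eq0 [_ Y1_gt0]]; split=> //; rewrite X2_eq0 expr0n exprn_gt0. Qed.

Lemma nbhdH_setD_Hemb : nbhdH `\` Hemb = nbhdH_offH.
Proof.
rewrite nbhdH_offHE; apply/seteqP; split=> w /=.
- case=> w_nbhd w_notH; split=> //; rewrite lt_def addr_ge0 ?sqr_ge0 // andbT.
  apply: contra_notN w_notH; rewrite paddr_eq0 ?sqr_ge0 // !sqrf_eq0.
  by case/andP=> /eqP X2_eq0 /eqP Y2_eq0; split=> //; split=> //; case: w_nbhd.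
- case=> w_nbhd XY_gt0; split=> // -[X2_eq0 [Y2_eq0 _]].
  by move: XY_gt0; rewrite X2_eq0 Y2_eq0 expr0n addr0 ltxx.
Qed.

Lemma open_param_dom : open (@param_dom R).
Proof.
have -> : @param_dom R =
    [set p | 0 < p.1.1.2] `&` ([set p | 0 < p.1.2] `&` [set p | 0 < 1 - p.1.2]).
  apply/seteqP; split=> p /=; rewrite subr_gt0; first by case=> ? /andP[].
  by case=> ? [? ?]; split=> //; apply/andP.
apply: openI; first by apply: open_elementary_gt0; decompose_elementary.
by apply: openI; apply: open_elementary_gt0; decompose_elementary.
Qed.

Lemma Fmap_smooth : smooth_on param_dom (@Fmap R).
Proof.
have q_neq0 p : param_dom p -> den_sqr p.1.2 (cos p.2) (sin p.2) != 0.
  by case=> _ t01; rewrite gt_eqF // den_sqr_gt0 // cos2Dsin2.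
have -> : @Fmap R = fun p => Fcs p.1.1.1 p.1.1.2 p.1.2 (cos p.2) (sin p.2).
  by apply: funext => p; exact: Fmap_Fcs.
rewrite /Fcs; repeat apply: smooth_on_pair => //; try exact: open_param_dom.
all: apply: elementary_smooth; first exact: open_param_dom.
all: rewrite /den_sqr /den_re /den_im /num_re /num_im; decompose_elementary.
all: exact: q_neq0.
Qed.

Lemma Finv_smooth : smooth_on nbhdH_offH Finv.
Proof.
have pos w : nbhdH_offH w ->
  let T := (w.1.1.2 ^+ 2 + w.2 ^+ 2) / (w.1.2 ^+ 2 + w.2 ^+ 2) in
  [/\ 0 < w.1.2, 0 < w.1.2 ^+ 2 + w.2 ^+ 2, 0 < T, 0 < Num.sqrt T &
      0 < 4 + (w.2 / w.1.2) ^+ 2 * Num.sqrt T ^+ 2].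
  case=> Y1_gt0 _ XY_gt0 T; have den_gt0 : 0 < w.1.2 ^+ 2 + w.2 ^+ 2.
    by have := sqr_ge0 w.2; nra.
  have T_gt0 : 0 < T by rewrite divr_gt0.
  split=> //; first by rewrite sqrtr_gt0.
  by have := mulr_ge0 (sqr_ge0 (w.2 / w.1.2)) (sqr_ge0 (Num.sqrt T)); lra.
rewrite /Finv /inv_cos /inv_sin /den_re /den_im /num_re /num_im /=.
repeat apply: smooth_on_pair => //; try exact: open_nbhdH_offH.
all: apply: elementary_smooth; first exact: open_nbhdH_offH.
all: decompose_elementary.
all: by move=> w /pos[*]; rewrite ?mulf_neq0 ?gt_eqF.
Qed.

Lemma Finv_Fmap (p : R * R * R * R) : param_dom p ->
  Finv (Fmap p) = (p.1.1.1, p.1.1.2, p.1.2, (cos p.2, sin p.2)).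
Proof. by case=> y_gt0 t01; rewrite Fmap_Fcs Finv_Fcs // cos2Dsin2. Qed.

Lemma Fmap_inj (p q : R * R * R * R) : param_dom p -> param_dom q -> Fmap p = Fmap q ->
  [/\ p.1.1.1 = q.1.1.1, p.1.1.2 = q.1.1.2, p.1.2 = q.1.2 &
      exists k : int, p.2 = q.2 + k%:~R * (2 * pi)].
Proof.
move=> p_dom q_dom /(congr1 Finv); rewrite !Finv_Fmap // => -[-> -> -> cosE sinE].
by split=> //; exact: cos_sin_eq_mod2pi.
Qed.

Lemma Fmap_image : Fmap @` param_dom = nbhdH_offH.
Proof.
apply/seteqP; split=> [_ [p [y_gt0 t01] <-] | w w_offH].
  by rewrite Fmap_Fcs; exact: Fcs_offH (cos2Dsin2 _).
have [y_gt0 t01 cs1 FcsK] := Finv_offH w_offH.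
have [th [cosE sinE]] := cos_sin_onto_circle cs1.
by exists ((Finv w).1.1.1, (Finv w).1.1.2, (Finv w).1.2, th); rewrite // Fmap_Fcs /= cosE sinE.
Qed.

Lemma Fmap_eq_Finv (w : HC R) (p : R * R * R * R) : nbhdH_offH w -> param_dom p ->
  Fmap p = w <-> Finv w = (p.1.1.1, p.1.1.2, p.1.2, (cos p.2, sin p.2)).
Proof.
move=> w_offH p_dom; split=> [<- | Finv_w]; first exact: Finv_Fmap.
by have [_ _ _ <-] := Finv_offH w_offH; rewrite Finv_w Fmap_Fcs.
Qed.

End HorocycleMap.

Theorem proposition2 (R : realType) :
  (* (z,t,theta) |-> h_{-it}(z,theta) is C^oo on H x (0,1) x (R/2piZ) *)
  smooth_on param_dom (@Fmap R) /\
  (* injective on H x (0,1) x (R/2piZ) *)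
  (forall p q : R * R * R * R, param_dom p -> param_dom q -> Fmap p = Fmap q ->
     [/\ p.1.1.1 = q.1.1.1, p.1.1.2 = q.1.1.2, p.1.2 = q.1.2 &
         exists k : int, p.2 = q.2 + k%:~R * (2 * pi)]) /\
  exists U : set (HC R),
    [/\ open U, Hemb `<=` U,
        (* the image is exactly U \ H *)
        Fmap @` param_dom = U `\` Hemb &
        (* the inverse U \ H -> H x (0,1) x S^1 (S^1 embedded in R^2) is C^oo *)
        exists G : HC R -> (R * R * R * (R * R))%type,
          smooth_on (U `\` Hemb) G /\
          forall (w : HC R) (p : R * R * R * R), (U `\` Hemb) w -> param_dom p ->
            (Fmap p = w <->
             G w = (p.1.1.1, p.1.1.2, p.1.2, (cos p.2, sin p.2)))].
Proof.
split; first exact: Fmap_smooth.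
split; first exact: Fmap_inj.
exists nbhdH; rewrite nbhdH_setD_Hemb; split.
- exact: open_nbhdH.
- exact: Hemb_sub_nbhdH.
- exact: Fmap_image.
- by exists Finv; split; [exact: Finv_smooth | exact: Fmap_eq_Finv].
Qed.
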